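(* Let $\mathcal{S}$ be a state space, $\mathcal{A}$ a finite action space, $\rho$ a distribution on $\mathcal{S}$, $\pi_{\mathrm{ref}}$ a full-support policy, $\beta>0$, $R>0$, $r^*:\mathcal{S}\times\mathcal{A}\to[0,R]$, and let $\Pi$ be a finite policy class with $\pi^*_{r^*}\in\Pi$ and $|\log(\pi(a|s)/\pi_{\mathrm{ref}}(a|s))|\le R/\beta$ for all $\pi\in\Pi$ and all $(s,a)$. Then for any bounded reward model $r:\mathcal{S}\times\mathcal{A}\to\mathbb{R}$ with associated optimal policy $\pi^*_r$, $$\mathrm{Cov}^{\pi^*_{r^*}|\pi^*_r}\le\min_{b\in\mathbb{R}}\mathbb{E}_{s\sim\rho}\Big[\mathbb{E}^2_{a\sim\pi^*_{r^*}(\cdot|s)}\Big[\exp\Big(\frac{|r^*(s,a)-r(s,a)-b|}{\beta}\Big)\Big]\Big].$$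
   Context: For a reward $r$, $\pi^*_r(a|s):=\pi_{\mathrm{ref}}(a|s)e^{r(s,a)/\beta}/\sum_{a'}\pi_{\mathrm{ref}}(a'|s)e^{r(s,a')/\beta}$ (the maximizer of $\mathbb{E}_{s\sim\rho}[\mathbb{E}_{a\sim\pi}r(s,a)-\beta\mathrm{KL}(\pi(\cdot|s)\|\pi_{\mathrm{ref}}(\cdot|s))]$). $\mathrm{Cov}^{\tilde\pi|\pi}:=\mathbb{E}_{s\sim\rho,a\sim\tilde\pi(\cdot|s)}[\tilde\pi(a|s)/\pi(a|s)]$. $\mathbb{E}^2[\cdot]$ denotes the square of the expectation. *)

From HB Require Import structures.
From mathcomp Require Import all_boot all_order all_algebra.
From mathcomp Require Import all_classical all_reals all_analysis.
Set Implicit Arguments. Unset Strict Implicit. Unset Printing Implicit Defensive.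
Import Order.TTheory GRing.Theory Num.Theory.
Local Open Scope ring_scope.

Section Defs.
Context {R : realType} {S : Type} {A : finType}.

Definition is_policy (pi : S -> A -> R) : Prop :=
  forall s, (forall a, 0 <= pi s a) /\ \sum_(a : A) pi s a = 1.

Definition pistar (pi_ref : S -> A -> R) (beta : R) (r : S -> A -> R)
  : S -> A -> R :=
  fun s a => pi_ref s a * expR (r s a / beta) /
             \sum_(a' : A) pi_ref s a' * expR (r s a' / beta).

Definition cov_inner (pt p : S -> A -> R) (s : S) : R :=
  \sum_(a : A) pt s a * (pt s a / p s a).

End Defs.

Definition Cov {R : realType} {d : measure_display} {S : measurableType d}
  {A : finType} (rho : probability S R) (pt p : S -> A -> R) : \bar R :=
  (\int[rho]_s (cov_inner pt p s)%:E)%E.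

From HB Require Import structures.
From mathcomp Require Import all_boot all_order all_algebra.
From mathcomp Require Import all_classical all_reals all_analysis.
From mathcomp Require Import measurable_realfun ring.
Set Implicit Arguments. Unset Strict Implicit. Unset Printing Implicit Defensive.
Import Order.TTheory GRing.Theory Num.Theory.
Local Open Scope ring_scope.

(* Fix a state s and write p = pi*_{r*}(.|s), q = pi*_r(.|s).  Both are Gibbs
   policies over the same pi_ref, so p/q = k u with
   u a = exp ((r* - r - b)(s, a) / beta) and k independent of a.  Hence
   E_p[p/q] = k E_p[u], while E_p[1/u] = k E_q[1] = k, so that
   E_p[p/q] = E_p[u] E_p[1/u].  Both u and 1/u are bounded by
   exp (|r* - r - b| / beta), which gives the bound pointwise in s; integrating
   against rho concludes. *)

Section chi2_factorization.
Variables (R : numFieldType) (A : finType) (p q u : A -> R) (k : R).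
Hypotheses (q_gt0 : forall a, 0 < q a) (u_gt0 : forall a, 0 < u a).
Hypothesis sum_q : \sum_a q a = 1.
Hypothesis ratio_pq : forall a, p a / q a = k * u a.

Lemma chi2_factor :
  \sum_a p a * (p a / q a) = (\sum_a p a * u a) * (\sum_a p a / u a).
Proof.
have -> : \sum_a p a / u a = k.
  rewrite -[k]mulr1 -sum_q mulr_sumr; apply: eq_bigr => a _.
  have -> : p a = k * u a * q a by rewrite -ratio_pq divfK ?gt_eqF.
  by rewrite mulrAC mulfK ?gt_eqF.
by rewrite mulr_suml; apply: eq_bigr => a _; rewrite ratio_pq mulrA mulrAC.
Qed.

Lemma chi2_factor_le (e : A -> R) : (forall a, 0 <= p a) ->
    (forall a, u a <= e a) -> (forall a, (u a)^-1 <= e a) ->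
  \sum_a p a * (p a / q a) <= (\sum_a p a * e a) ^+ 2.
Proof.
move=> p_ge0 ue uVe; rewrite chi2_factor expr2.
apply: ler_pM.
- by apply: sumr_ge0 => a _; rewrite mulr_ge0 // ltW.
- by apply: sumr_ge0 => a _; rewrite mulr_ge0 // invr_ge0 ltW.
- by apply: ler_sum => a _; exact: ler_wpM2l.
- by apply: ler_sum => a _; exact: ler_wpM2l.
Qed.

End chi2_factorization.

Section gibbs_policy.
Variables (R : realType) (S : Type) (A : finType).
Variables (pi_ref : S -> A -> R) (beta : R).
Hypothesis pi_ref_gt0 : forall s a, 0 < pi_ref s a.

Definition gibbs_partition (r : S -> A -> R) (s : S) : R :=
  \sum_a pi_ref s a * expR (r s a / beta).

Lemma gibbs_partition_gt0 r s (a : A) : 0 < gibbs_partition r s.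
Proof.
rewrite /gibbs_partition (bigD1 a) //= ltr_pwDl ?mulr_gt0 ?expR_gt0 //.
by apply: sumr_ge0 => a' _; rewrite mulr_ge0 // ltW ?expR_gt0.
Qed.

Lemma pistar_gt0 r s a : 0 < pistar pi_ref beta r s a.
Proof.
rewrite divr_gt0 ?mulr_gt0 ?expR_gt0 // -/(gibbs_partition r s).
exact: (gibbs_partition_gt0 _ _ a).
Qed.

Lemma sum_pistar r s (a : A) : \sum_a' pistar pi_ref beta r s a' = 1.
Proof.
rewrite -mulr_suml -/(gibbs_partition r s) divff // gt_eqF //.
exact: (gibbs_partition_gt0 _ _ a).
Qed.

Lemma pistar_ratio r r' s a :
  pistar pi_ref beta r s a / pistar pi_ref beta r' s a =
  gibbs_partition r' s / gibbs_partition r s * expR ((r s a - r' s a) / beta).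
Proof.
rewrite /pistar -!/(gibbs_partition _ s) mulrBl expRB.
have := gibbs_partition_gt0 r s a; have := gibbs_partition_gt0 r' s a.
have := pi_ref_gt0 s a; have := expR_gt0 (r' s a / beta).
move=> *; field; by rewrite !gt_eqF.
Qed.

Hypothesis beta_gt0 : 0 < beta.

Lemma cov_inner_pistar_le r r' b s :
  cov_inner (pistar pi_ref beta r) (pistar pi_ref beta r') s <=
  (\sum_a pistar pi_ref beta r s a * expR (`|r s a - r' s a - b| / beta)) ^+ 2.
Proof.
have [a0 _ | A_empty] := pickP (fun _ : A => true); last first.
  by rewrite /cov_inner !big_pred0.
pose u a := expR ((r s a - r' s a - b) / beta).
apply: (@chi2_factor_le _ _ _ _ u
  (gibbs_partition r' s / gibbs_partition r s * expR (b / beta))).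
- by move=> a; exact: pistar_gt0.
- by move=> a; exact: expR_gt0.
- exact: sum_pistar _ _ a0.
- move=> a; rewrite pistar_ratio /u -[RHS]mulrA -expRD -mulrDl.
  by rewrite [b + _]addrC subrK.
- by move=> a; exact/ltW/pistar_gt0.
- by move=> a; rewrite ler_expR ler_pM2r ?invr_gt0 // ler_norm.
- move=> a; rewrite -expRN ler_expR -mulNr ler_pM2r ?invr_gt0 //.
  by rewrite -normrN ler_norm.
Qed.

End gibbs_policy.

Section measurability.
Variables (d : measure_display) (S : measurableType d) (R : realType).

Lemma measurable_fun_pdiv (f g : S -> R) :
    measurable_fun setT f -> measurable_fun setT g -> (forall s, 0 < g s) ->
  measurable_fun setT (fun s => f s / g s).
Proof.
move=> mf mg g_gt0.
have -> : (fun s => f s / g s) = (fun s => f s * expR (- ln (g s))).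
  by apply/funext => s; rewrite expRN lnK // posrE.
apply: measurable_funM => //; apply: measurableT_comp => //.
by apply: measurableT_comp => //; exact: measurableT_comp.
Qed.

Variables (A : finType) (pi_ref : S -> A -> R) (beta : R).
Hypothesis pi_ref_gt0 : forall s a, 0 < pi_ref s a.
Hypothesis m_pi_ref : forall a, measurable_fun setT (pi_ref^~ a).

Lemma measurable_pistar (r : S -> A -> R) a :
    (forall a, measurable_fun setT (r^~ a)) ->
  measurable_fun setT (fun s => pistar pi_ref beta r s a).
Proof.
move=> mr; have m_weight a' : measurable_fun setT
    (fun s => pi_ref s a' * expR (r s a' / beta)).
  apply: measurable_funM => //; apply: measurableT_comp => //.
  exact: measurable_funM.
apply: measurable_fun_pdiv => //; first exact: measurable_sum.
by move=> s; exact: (gibbs_partition_gt0 beta pi_ref_gt0 r s a).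
Qed.

End measurability.

Theorem lemmaE5 (R : realType) (d : measure_display) (S : measurableType d)
  (A : finType) (rho : probability S R) (pi_ref : S -> A -> R)
  (beta Rmax : R) (rstar : S -> A -> R) (n : nat) (Pi : 'I_n -> S -> A -> R)
  (r : S -> A -> R) :
  is_policy pi_ref ->
  (forall s a, 0 < pi_ref s a) ->
  (forall a, measurable_fun setT (fun s => pi_ref s a)) ->
  0 < beta -> 0 < Rmax ->
  (forall s a, 0 <= rstar s a <= Rmax) ->
  (forall a, measurable_fun setT (fun s => rstar s a)) ->
  (forall i, is_policy (Pi i)) ->
  (exists i, Pi i = pistar pi_ref beta rstar) ->
  (forall i s a, `|ln (Pi i s a / pi_ref s a)| <= Rmax / beta) ->
  (exists M, forall s a, `|r s a| <= M) ->
  (forall a, measurable_fun setT (fun s => r s a)) ->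
  forall b : R,
  (Cov rho (pistar pi_ref beta rstar) (pistar pi_ref beta r) <=
   \int[rho]_s ((\sum_(a : A) pistar pi_ref beta rstar s a *
                   expR (`|rstar s a - r s a - b| / beta)) ^+ 2)%:E)%E.
Proof.
move=> _ pi_ref_gt0 m_pi_ref beta_gt0 _ _ m_rstar _ _ _ _ m_r b.
have m_pstar a := measurable_pistar beta pi_ref_gt0 m_pi_ref a m_rstar.
have m_pr a := measurable_pistar beta pi_ref_gt0 m_pi_ref a m_r.
have pistar_pos := pistar_gt0 beta pi_ref_gt0.
apply: ge0_le_integral => //.
- move=> s _; rewrite lee_fin; apply: sumr_ge0 => a _.
  have [p_gt0 q_gt0] := (pistar_pos rstar s a, pistar_pos r s a).
  by apply: mulr_ge0; [exact: ltW | apply: divr_ge0; exact: ltW].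
- apply/measurable_EFinP; apply: measurable_sum => a.
  by apply: measurable_funM => //; exact: measurable_fun_pdiv.
- apply/measurable_EFinP; apply: measurable_funX; apply: measurable_sum => a.
  apply: measurable_funM => //; apply: measurableT_comp => //.
  apply: measurable_funM => //; apply: measurableT_comp => //.
  by apply: measurable_funB => //; exact: measurable_funB.
- by move=> s _; rewrite lee_fin; exact: cov_inner_pistar_le.
Qed.
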